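(* Let $p$ be a prime, $\Phi:\mathbb{N}\to\mathbb{N}$ strictly increasing, and $f\in\mathcal{F}(\Phi)$. Let $n_0,u\in\mathbb{N}$ with $u<p^{1+\Phi(n_0)}$, and let $\Lambda:=\{u'\in\mathbb{Z}_p: u'\equiv u\pmod{p^{1+\Phi(n_0)}}\}$. Assume $f$ is uniformly approximable on $\Lambda$ with respect to $\Phi$, with constants $h(\Lambda)$, $l(\Lambda)$, and assume that $n_0+1\ge l(\Lambda)$, that $f(u)\equiv 0\pmod{p^{h(\Lambda)+n_0+1}}$, and that $|(\delta_nf)(u')|_p=1$ for all $n\ge n_0$ and all $u'\in\Lambda$. Then there exists a unique $\xi\in\mathbb{Z}_p$ such that $f(\xi)=0$, $\xi\equiv u\pmod{p^{1+\Phi(n_0)}}$, and $\rho(\xi;n+1)\in\{0,1,\dots,p-1\}$ for every $n\ge n_0$.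
   Context: $\mathbb{N}=\{0,1,2,\dots\}$. $|\cdot|_p$ is the $p$-adic absolute value with $|p|_p=p^{-1}$. Each $x\in\mathbb{Z}_p$ is written $x=\sum_{i\ge0}x_ip^i$ with digits $x_i\in\{0,\dots,p-1\}$. Set $\Phi(-1):=-1$. $\mathcal{F}(\Phi)$ is the class of continuous $f:\mathbb{Z}_p\to\mathbb{Z}_p$ such that for every positive integer $n$ and all $x,y\in\mathbb{Z}_p$: if $|x-y|_p\le p^{-1-\Phi(n-1)}$ then $|f(x)-f(y)|_p\le p^{-n}$. For $x\in\mathbb{Z}_p$ and $j\in\mathbb{N}$, $\rho(x;j):=p^{-1-\Phi(j-1)}\sum_{i=1+\Phi(j-1)}^{\Phi(j)}x_ip^i$. A function $f:\mathbb{Z}_p\to\mathbb{Z}_p$ is approximable at $u\in\mathbb{Z}_p$ with respect to $\Phi$ if there exist nonnegative integers $h=h(u)$, $l=l(u)$ and $p$-adic numbers $(\delta_nf)(u)$ ($n\ge l$) such that for every integer $n\ge l$ and every $u'\in\mathbb{Z}_p$, $f(u+p^{1+\Phi(n-1)}u')\equiv f(u)+p^{h+n}u'\,(\delta_nf)(u)\pmod{p^{h+n+1}}$ (i.e. the difference of the two sides has $p$-adic valuation at least $h+n+1$). $f$ is uniformly approximable on $\Lambda\subset\mathbb{Z}_p$ with respect to $\Phi$ if it is approximable at every $u\in\Lambda$ with respect to $\Phi$ and $h(u)$, $l(u)$ can be chosen constant on $\Lambda$; these constants are denoted $h(\Lambda)$, $l(\Lambda)$. *)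

(* p-adic integers Z_p modelled as coherent sequences of
   residues: x is represented by (x mod p^n)_n, with x_n = x_{n+1} mod p^n. *)
From mathcomp Require Import all_boot.
Set Implicit Arguments. Unset Strict Implicit. Unset Printing Implicit Defensive.

Record Zp (p : nat) := MkZp {
  zres : nat -> nat;
  zres_coh : forall n, zres n = zres n.+1 %% p ^ n }.

Lemma expn_dvdS (p n : nat) : p ^ n %| p ^ n.+1.
Proof. by rewrite expnS dvdn_mull. Qed.

Definition zofnat_res (p u : nat) (n : nat) := u %% p ^ n.
Lemma zofnat_coh p u n : zofnat_res p u n = zofnat_res p u n.+1 %% p ^ n.
Proof. by rewrite /zofnat_res modn_dvdm // expn_dvdS. Qed.
Definition zofnat (p u : nat) : Zp p := MkZp (@zofnat_coh p u).

Definition zadd_res p (x y : Zp p) n := (zres x n + zres y n) %% p ^ n.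
Lemma zadd_coh p (x y : Zp p) n : zadd_res x y n = zadd_res x y n.+1 %% p ^ n.
Proof.
rewrite /zadd_res modn_dvdm ?expn_dvdS // (zres_coh x n) (zres_coh y n).
by rewrite modnDm.
Qed.
Definition zadd p (x y : Zp p) : Zp p := MkZp (@zadd_coh p x y).

Definition zmul_res p (x y : Zp p) n := (zres x n * zres y n) %% p ^ n.
Lemma zmul_coh p (x y : Zp p) n : zmul_res x y n = zmul_res x y n.+1 %% p ^ n.
Proof.
rewrite /zmul_res modn_dvdm ?expn_dvdS // (zres_coh x n) (zres_coh y n).
by rewrite modnMm.
Qed.
Definition zmul p (x y : Zp p) : Zp p := MkZp (@zmul_coh p x y).

Definition zcong p (k : nat) (x y : Zp p) : Prop := zres x k = zres y k.

(* |x|_p = 1, i.e. x is not divisible by p *)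
Definition zunit p (x : Zp p) : Prop := zres x 1 <> 0.

Definition zdigit p (x : Zp p) (i : nat) : nat := (zres x i.+1 %/ p ^ i) %% p.

(* 1 + Phi(j-1), with the convention Phi(-1) = -1 *)
Definition onePhiPrev (Phi : nat -> nat) (j : nat) : nat :=
  if j is j'.+1 then (Phi j').+1 else 0.

(* rho(x; j) = p^{-1-Phi(j-1)} * sum_{i = 1+Phi(j-1)}^{Phi(j)} x_i p^i *)
Definition rho p (Phi : nat -> nat) (x : Zp p) (j : nat) : nat :=
  \sum_(onePhiPrev Phi j <= i < (Phi j).+1) zdigit x i * p ^ (i - onePhiPrev Phi j).

Definition zcontinuous p (f : Zp p -> Zp p) : Prop :=
  forall (x : Zp p) (k : nat), exists m : nat,
    forall y : Zp p, zcong m x y -> zcong k (f x) (f y).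

Definition classF p (Phi : nat -> nat) (f : Zp p -> Zp p) : Prop :=
  zcontinuous f /\
  forall (n : nat) (x y : Zp p), 0 < n ->
    zcong (onePhiPrev Phi n) x y -> zcong n (f x) (f y).

(* f approximable at u w.r.t. Phi with given h, l and (delta_n f)(u) = delta n *)
Definition approx_at_with p (Phi : nat -> nat) (f : Zp p -> Zp p) (u : Zp p)
    (h l : nat) (delta : nat -> Zp p) : Prop :=
  forall (n : nat) (u' : Zp p), l <= n ->
    zcong (h + n).+1
      (f (zadd u (zmul (zofnat p (p ^ onePhiPrev Phi n)) u')))
      (zadd (f u) (zmul (zofnat p (p ^ (h + n))) (zmul u' (delta n)))).

Definition unif_approx_with p (Phi : nat -> nat) (f : Zp p -> Zp p)
    (Lambda : Zp p -> Prop) (h l : nat) (delta : Zp p -> nat -> Zp p) : Prop :=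
  forall u : Zp p, Lambda u -> approx_at_with Phi f u h l (delta u).

From mathcomp Require Import all_boot.
From Stdlib Require Import FunctionalExtensionality ProofIrrelevance.
Set Implicit Arguments. Unset Strict Implicit. Unset Printing Implicit Defensive.

(* Approximability turns the congruence
   f(X + p^(1+Phi(n)) c) = 0 (mod p^(h+n+2)) into a linear congruence
   q + c (delta_(n+1) f)(X) = 0 (mod p) in the digit c; since the coefficient
   is a unit it has exactly one solution c < p.  Starting from u and adding
   these digits block by block yields a coherent sequence of residues, i.e. a
   root xi whose blocks rho(xi; n+1) are single digits.  Conversely, for any
   such root y, approximability at its truncations shows that each block of y
   solves the same linear congruence, so y = xi. *)

Section ZpArith.

Variable p : nat.
Implicit Types x y z : Zp p.

Lemma Zp_ext x y : (forall n, zres x n = zres y n) -> x = y.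
Proof.
case: x => zx cx; case: y => zy cy /= eq_res.
have eq_z : zx = zy by apply: functional_extensionality.
by subst zy; f_equal; apply: proof_irrelevance.
Qed.

Lemma zres_modn x k m : k <= m -> zres x k = zres x m %% p ^ k.
Proof.
move=> le_km; rewrite -(subnKC le_km); elim: (m - k) => [|d IH].
  by rewrite addn0 (zres_coh x k) modn_mod.
by rewrite addnS IH (zres_coh x (k + d)) modn_dvdm // dvdn_exp2l // leq_addr.
Qed.

Lemma zcong_le k m x y : k <= m -> zcong m x y -> zcong k x y.
Proof. by move=> le_km; rewrite /zcong !(zres_modn _ le_km) => ->. Qed.

Lemma zofnatE a k : zres (zofnat p a) k = a %% p ^ k. Proof. by []. Qed.

Lemma zaddE x y k : zres (zadd x y) k = (zres x k + zres y k) %% p ^ k.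
Proof. by []. Qed.

Lemma zmulE x y k : zres (zmul x y) k = (zres x k * zres y k) %% p ^ k.
Proof. by []. Qed.

Lemma zofnat_addM a b c :
  zadd (zofnat p a) (zmul (zofnat p b) (zofnat p c)) = zofnat p (a + b * c).
Proof. by apply: Zp_ext => k; rewrite zaddE zmulE !zofnatE modnMm modnDm. Qed.

Lemma zcong_add_expM k x z : zcong k (zadd x (zmul (zofnat p (p ^ k)) z)) x.
Proof.
by rewrite /zcong zaddE zmulE zofnatE modnn mul0n mod0n addn0 -zres_modn.
Qed.

Hypothesis p_gt0 : 0 < p.

Lemma zres_digitS x b : zres x b.+1 = zres x b + p ^ b * zdigit x b.
Proof.
have lt_res : zres x b.+1 < p ^ b * p.
  by rewrite -expnSr zres_coh ltn_mod expn_gt0 p_gt0.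
rewrite /zdigit modn_small; last by rewrite ltn_divLR ?expn_gt0 ?p_gt0 // mulnC.
rewrite {1}(divn_eq (zres x b.+1) (p ^ b)) -(zres_modn x (leqnSn b)).
by rewrite addnC mulnC.
Qed.

Lemma zres_digits x a b : a <= b ->
  zres x b = zres x a + p ^ a * \sum_(a <= i < b) zdigit x i * p ^ (i - a).
Proof.
move=> le_ab; rewrite -(subnKC le_ab); elim: (b - a) => [|d IH].
  by rewrite addn0 big_geq // muln0 addn0.
rewrite addnS zres_digitS IH big_nat_recr /= ?leq_addr // mulnDr addnA.
by congr (_ + _); rewrite addKn mulnCA -expnD mulnC.
Qed.

Lemma zres_shift x m :
  exists z, x = zadd (zofnat p (zres x m)) (zmul (zofnat p (p ^ m)) z).
Proof.
have coh k : zres x (k + m) %/ p ^ m = (zres x (k.+1 + m) %/ p ^ m) %% p ^ k.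
  rewrite (zres_modn x (leqnSn (k + m))) -addSn divn_modl; last first.
    by rewrite expnD dvdn_mull.
  by rewrite expnD mulnK // expn_gt0 p_gt0.
exists (MkZp coh); apply: Zp_ext => k.
rewrite zaddE zmulE !zofnatE /= modnMml modnDm.
rewrite (zres_modn x (leq_addl k m)) [p ^ m * _]mulnC addnC -divn_eq.
by rewrite -zres_modn // leq_addr.
Qed.

Lemma zres_rho (Phi : nat -> nat) x n : Phi n < Phi n.+1 ->
  zres x (Phi n.+1).+1 = zres x (Phi n).+1 + p ^ (Phi n).+1 * rho Phi x n.+1.
Proof. by move=> lt_Phi; apply: zres_digits; rewrite ltnS ltnW. Qed.

End ZpArith.

Lemma modn_add_expM p a b c y : a <= b -> (y + p ^ b * c) %% p ^ a = y %% p ^ a.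
Proof.
move=> le_ab; have /dvdnP [q ->] : p ^ a %| p ^ b * c.
  by apply: dvdn_mulr; apply: dvdn_exp2l.
by rewrite addnC modnMDl.
Qed.

Lemma ltn_add_expM p a x d : x < p ^ a -> d < p -> x + p ^ a * d < p ^ a.+1.
Proof.
move=> lt_x lt_d; rewrite expnSr.
apply: leq_trans (_ : p ^ a * d.+1 <= _); first by rewrite mulnS ltn_add2r.
by rewrite leq_mul2l lt_d orbT.
Qed.

Lemma dvdn_expS_add_expM p k a c : 0 < p -> p ^ k %| a ->
  (p ^ k.+1 %| a + p ^ k * c) = (p %| a %/ p ^ k + c).
Proof.
move=> p_gt0 /divnK def_a.
by rewrite -{1}def_a [_ * p ^ k]mulnC -mulnDr expnSr dvdn_pmul2l ?expn_gt0 ?p_gt0.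
Qed.

Section LinearCongruence.

Variables (p a d : nat).
Hypotheses (p_prime : prime p) (p_ndvd_d : ~~ (p %| d)).

Lemma lin_cong_solvable : exists2 c, c < p & p %| a + c * d.
Proof.
have p_gt0 := prime_gt0 p_prime.
have [e _] := Bezoutl d p_gt0.
have -> : gcdn p d = 1 by apply/eqP; rewrite -/(coprime p d) prime_coprime.
move=> dvd_ed.
exists ((a * e) %% p); first by rewrite ltn_mod.
have : p %| a * (1 + e * d) by apply: dvdn_mull.
by rewrite /dvdn -modnDmr modnMml modnDmr mulnDr muln1 mulnA.
Qed.

Lemma lin_cong_uniq c c' : c < p -> c' < p ->
  p %| a + c * d -> p %| a + c' * d -> c = c'.
Proof.
wlog le_cc' : c c' / c <= c'.
  move=> W; case: (leqP c c') => [? | /ltnW ?]; first exact: W.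
  by move=> ? ? ? ?; apply/esym/W.
move=> _ lt_c'p dvd_c dvd_c'.
have : p %| (c' - c) * d by rewrite mulnBl -(subnDl a) dvdn_sub.
rewrite Euclid_dvdM // (negbTE p_ndvd_d) orbF.
case def_diff: (c' - c) => [|k].
  by move/eqP: def_diff; rewrite subn_eq0 => le_c'c _; apply/eqP; rewrite eqn_leq le_cc'.
move=> /(dvdn_leq (ltn0Sn k)); rewrite -def_diff leqNgt.
by rewrite (leq_ltn_trans (leq_subr _ _) lt_c'p).
Qed.

End LinearCongruence.

Section Approximation.

Variables (p : nat) (Phi : nat -> nat) (f : Zp p -> Zp p) (h l : nat).
Variables (dl : nat -> Zp p) (W : nat).
Hypotheses (p_gt0 : 0 < p) (f_approx : approx_at_with Phi f (zofnat p W) h l dl).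

Lemma approx_at_lin n c : l <= n.+1 -> zres (f (zofnat p W)) (h + n).+1 = 0 ->
  (zres (f (zofnat p (W + p ^ (Phi n).+1 * c))) (h + n).+2 == 0)
  = (p %| zres (f (zofnat p W)) (h + n).+2 %/ p ^ (h + n).+1
          + c * zres (dl n.+1) (h + n).+2).
Proof.
move=> le_l fW_eq0; have := f_approx (zofnat p c) le_l.
rewrite -zofnat_addM /zcong addnS => ->.
rewrite zaddE !zmulE !zofnatE !modnMml modnMmr modnDmr mulnA -mulnA.
apply: dvdn_expS_add_expM p_gt0 _.
by rewrite /dvdn -zres_modn ?fW_eq0.
Qed.

Lemma approx_at_cong n y : l <= n -> zres y (onePhiPrev Phi n) = W ->
  zcong (h + n) (f y) (f (zofnat p W)).
Proof.
move=> le_l yW; have [z def_y] := zres_shift p_gt0 y (onePhiPrev Phi n).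
have := f_approx z le_l; rewrite -yW -def_y => /(zcong_le (leqnSn _)).
rewrite /zcong => ->.
exact: zcong_add_expM.
Qed.

End Approximation.

Section HenselLifting.

Variables (p : nat) (Phi : nat -> nat) (f : Zp p -> Zp p) (n0 u h l : nat).
Variable delta : Zp p -> nat -> Zp p.
Hypotheses (p_prime : prime p) (Phi_incr : {homo Phi : m n / m < n}).
Hypothesis f_lipschitz : forall n x y, 0 < n ->
  zcong (onePhiPrev Phi n) x y -> zcong n (f x) (f y).
Hypothesis lt_u : u < p ^ (Phi n0).+1.
Hypothesis f_approx :
  unif_approx_with Phi f (fun u' => zcong (Phi n0).+1 u' (zofnat p u)) h l delta.
Hypothesis le_l : l <= n0.+1.
Hypothesis fu_eq0 : zcong (h + n0).+1 (f (zofnat p u)) (zofnat p 0).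
Hypothesis delta_unit : forall n u', n0 <= n ->
  zcong (Phi n0).+1 u' (zofnat p u) -> zunit (delta u' n).

Let p_gt0 : 0 < p := prime_gt0 p_prime.

Lemma Phi_mono : {homo Phi : m n / m <= n}.
Proof. by move=> m n; rewrite (leq_mono Phi_incr). Qed.

Lemma leq_PhiS_addn k : k <= (Phi (n0 + k)).+1.
Proof.
have leq_Phi n : n <= Phi n.
  by elim: n => // n IH; apply: leq_ltn_trans IH (Phi_incr (ltnSn n)).
by apply: leq_trans (leq_addl n0 k) (leq_trans (leq_Phi _) (leqnSn _)).
Qed.

Lemma zofnat_cong_u W : W %% p ^ (Phi n0).+1 = u ->
  zcong (Phi n0).+1 (zofnat p W) (zofnat p u).
Proof. by move=> W_u; rewrite /zcong !zofnatE W_u modn_small. Qed.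

Definition lift_ok n X c : bool :=
  zres (f (zofnat p (X + p ^ (Phi n).+1 * c))) (h + n).+2 == 0.

Definition lift_digit n X : nat :=
  if [pick c : 'I_p | lift_ok n X c] is Some c then c else 0.

Lemma lift_digit_spec n X : n0 <= n -> X %% p ^ (Phi n0).+1 = u ->
    zres (f (zofnat p X)) (h + n).+1 = 0 ->
  [/\ lift_digit n X < p, lift_ok n X (lift_digit n X)
    & forall c, c < p -> lift_ok n X c -> c = lift_digit n X].
Proof.
move=> le_n X_u fX_eq0; have X_in := zofnat_cong_u X_u.
have le_ln : l <= n.+1 by apply: leq_trans le_l _; rewrite ltnS.
have ok_lin c := approx_at_lin p_gt0 (f_approx X_in) c le_ln fX_eq0.
have D_ndvd : ~~ (p %| zres (delta (zofnat p X) n.+1) (h + n).+2).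
  have := delta_unit (leqW le_n) X_in.
  by rewrite /zunit /dvdn (zres_modn _ (isT : 1 <= (h + n).+2)) expn1 => ?; apply/eqP.
have [c lt_cp ok_c] : exists2 c, c < p & lift_ok n X c.
  have [c lt_cp dvd_c] := lin_cong_solvable
    (zres (f (zofnat p X)) (h + n).+2 %/ p ^ (h + n).+1) p_prime D_ndvd.
  by exists c; rewrite // /lift_ok ok_lin.
have [lt_dp ok_d] : lift_digit n X < p /\ lift_ok n X (lift_digit n X).
  rewrite /lift_digit; case: pickP => [// | no_c].
  by have := no_c (Ordinal lt_cp); rewrite /= ok_c.
split=> // c' lt_c'p ok_c'.
move: ok_c' ok_d; rewrite /lift_ok !ok_lin.
exact: (lin_cong_uniq p_prime D_ndvd lt_c'p lt_dp).
Qed.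

Fixpoint hensel_approx k : nat :=
  if k is k'.+1 then
    hensel_approx k' + p ^ (Phi (n0 + k')).+1 * lift_digit (n0 + k') (hensel_approx k')
  else u.

Lemma hensel_approx_inv k :
  [/\ hensel_approx k %% p ^ (Phi n0).+1 = u,
      hensel_approx k < p ^ (Phi (n0 + k)).+1
    & zres (f (zofnat p (hensel_approx k))) (h + (n0 + k)).+1 = 0].
Proof.
elim: k => [|k [X_u lt_X fX_eq0]].
  rewrite addn0 /= modn_small //; split=> //.
  by move: fu_eq0; rewrite /zcong zofnatE mod0n.
have [lt_dp ok_d _] := lift_digit_spec (leq_addr k n0) X_u fX_eq0.
split=> /=.
- by rewrite modn_add_expM // ltnS Phi_mono // leq_addr.
- apply: leq_trans (ltn_add_expM lt_X lt_dp) _.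
  by rewrite leq_exp2l ?prime_gt1 // addnS !ltnS Phi_incr.
- by move: ok_d; rewrite /lift_ok !addnS => /eqP.
Qed.

Lemma hensel_approx_mod k d :
  hensel_approx (k + d) %% p ^ (Phi (n0 + k)).+1 = hensel_approx k.
Proof.
elim: d => [|d IH]; first by rewrite addn0 modn_small //; case: (hensel_approx_inv k).
by rewrite addnS /= modn_add_expM ?IH // ltnS Phi_mono // leq_add2l leq_addr.
Qed.

Lemma hensel_approx_coh j :
  hensel_approx j %% p ^ j = hensel_approx j.+1 %% p ^ j.+1 %% p ^ j.
Proof.
by rewrite modn_dvdm ?dvdn_exp2l //= modn_add_expM // leq_PhiS_addn.
Qed.

Definition hensel_root : Zp p := MkZp hensel_approx_coh.

Lemma zres_hensel_root k : zres hensel_root (Phi (n0 + k)).+1 = hensel_approx k.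
Proof.
by have := hensel_approx_mod k ((Phi (n0 + k)).+1 - k); rewrite subnKC ?leq_PhiS_addn.
Qed.

Lemma hensel_root_cong : zcong (Phi n0).+1 hensel_root (zofnat p u).
Proof. by have := zres_hensel_root 0; rewrite /zcong addn0 zofnatE modn_small. Qed.

Lemma hensel_root_zero : f hensel_root = zofnat p 0.
Proof.
apply: Zp_ext => j; rewrite zofnatE mod0n.
have [_ lt_X fX_eq0] := hensel_approx_inv j.
have root_X : zcong (onePhiPrev Phi (n0 + j).+1) hensel_root (zofnat p (hensel_approx j)).
  by rewrite /zcong zres_hensel_root zofnatE modn_small.
have := f_lipschitz (ltn0Sn _) root_X.
rewrite /zcong (zres_modn (f hensel_root) (leq_trans (leq_addl n0 j) (leqnSn _))) => ->.
by rewrite (@zres_modn _ _ _ (h + (n0 + j)).+1) ?fX_eq0 ?mod0n // ltnS leq_addl.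
Qed.

Lemma hensel_root_rho n : n0 <= n -> rho Phi hensel_root n.+1 < p.
Proof.
move=> /subnKC <-; set k := n - n0.
have := zres_rho p_gt0 hensel_root (Phi_incr (ltnSn (n0 + k))).
rewrite -addnS !zres_hensel_root /= => /addnI/eqP.
rewrite eqn_pmul2l ?expn_gt0 ?p_gt0 // => /eqP <-.
have [X_u _ fX_eq0] := hensel_approx_inv k.
by case: (lift_digit_spec (leq_addr k n0) X_u fX_eq0).
Qed.

Section Uniqueness.

Variable y : Zp p.
Hypotheses (fy_eq0 : f y = zofnat p 0) (y_cong : zcong (Phi n0).+1 y (zofnat p u)).
Hypothesis y_rho : forall n, n0 <= n -> rho Phi y n.+1 < p.

Lemma zres_root_eq_hensel_approx k : zres y (Phi (n0 + k)).+1 = hensel_approx k.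
Proof.
elim: k => [|k IH]; first by rewrite addn0 y_cong zofnatE modn_small.
have y_res := zres_rho p_gt0 y (Phi_incr (ltnSn (n0 + k))); rewrite IH in y_res.
rewrite addnS y_res /=.
have [X_u _ fX_eq0] := hensel_approx_inv k.
have [_ _ ok_uniq] := lift_digit_spec (leq_addr k n0) X_u fX_eq0.
congr (_ + _ * _); apply: ok_uniq; first exact: y_rho (leq_addr k n0).
set W := hensel_approx k + _ in y_res *.
have W_u : W %% p ^ (Phi n0).+1 = u.
  rewrite -y_res -zres_modn ?y_cong ?zofnatE ?modn_small // !ltnS.
  by rewrite Phi_mono // leqW // leq_addr.
have le_l2 : l <= (n0 + k).+2 by rewrite (leq_trans le_l) // !ltnS leqW // leq_addr.
have := approx_at_cong p_gt0 (f_approx (zofnat_cong_u W_u)) le_l2 y_res.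
by rewrite /zcong fy_eq0 zofnatE mod0n /lift_ok !addnS => <-.
Qed.

Lemma hensel_root_unique : y = hensel_root.
Proof.
apply: Zp_ext => j; rewrite !(zres_modn _ (leq_PhiS_addn j)).
by rewrite zres_root_eq_hensel_approx zres_hensel_root.
Qed.

End Uniqueness.

End HenselLifting.

Theorem corollary1 (p : nat) (Phi : nat -> nat) (f : Zp p -> Zp p)
    (n0 u : nat) (h l : nat) (delta : Zp p -> nat -> Zp p) :
  prime p ->
  (forall m n : nat, m < n -> Phi m < Phi n) ->
  classF Phi f ->
  u < p ^ (Phi n0).+1 ->
  unif_approx_with Phi f
    (fun u' : Zp p => zcong (Phi n0).+1 u' (zofnat p u)) h l delta ->
  l <= n0.+1 ->
  zcong (h + n0).+1 (f (zofnat p u)) (zofnat p 0) ->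
  (forall (n : nat) (u' : Zp p), n0 <= n ->
     zcong (Phi n0).+1 u' (zofnat p u) -> zunit (delta u' n)) ->
  exists! xi : Zp p,
    f xi = zofnat p 0 /\
    zcong (Phi n0).+1 xi (zofnat p u) /\
    (forall n : nat, n0 <= n -> rho Phi xi n.+1 < p).
Proof.
move=> p_prime Phi_incr [_ f_lipschitz] lt_u f_approx le_l fu_eq0 delta_unit.
exists (hensel_root f n0 u h Phi_incr); split.
  split; [|split].
  - by apply: (hensel_root_zero (l := l) (delta := delta)).
  - by apply: (hensel_root_cong (l := l) (delta := delta)).
  - by apply: (hensel_root_rho (l := l) (delta := delta)).
by move=> y [fy_eq0 [y_cong y_rho]]; apply/esym; apply: (hensel_root_unique (l := l) (delta := delta)).
Qed.
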